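(* Let $n>20$ be an integer. Then $A(n,2)=B(n,2)$.
   Context: $\mathrm{DGP}(n,k)$ ($1\le k<n/2$) is the graph with vertex set $\{(u_i,j),(v_i,j): 0\le i\le n-1,\ j\in\{0,1\}\}$ and edges $\{(u_i,j),(u_{i+1},1-j)\}$, $\{(u_i,j),(v_i,1-j)\}$ (spokes, forming the set $\mathcal{S}$), $\{(v_i,j),(v_{i+k},1-j)\}$, subscripts mod $n$ (the canonical double cover of the generalized Petersen graph $\mathrm{GP}(n,k)$). $A(n,k)=\mathrm{Aut}(\mathrm{DGP}(n,k))$ and $B(n,k)$ is the setwise stabilizer of $\mathcal{S}$ in $A(n,k)$. *)

From mathcomp Require Import all_boot fingroup perm.
Set Implicit Arguments. Unset Strict Implicit. Unset Printing Implicit Defensive.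

(* Vertices of DGP(n,k): (b, i, j) with b = false for u_i, b = true for v_i,
   i : 'I_n the index (mod n), j : bool the layer of the double cover. *)
Definition dgp_vertex (n : nat) : finType := (bool * 'I_n * bool)%type.

Definition shift_eq (n s : nat) (i i' : 'I_n) : bool := (i + s) %% n == i'.

Definition outer_adj n (x y : dgp_vertex n) : bool :=
  let: (bx, ix, jx) := x in let: (by_, iy, jy) := y in
  [&& ~~ bx, ~~ by_, jy == ~~ jx & shift_eq 1 ix iy || shift_eq 1 iy ix].

Definition spoke_adj n (x y : dgp_vertex n) : bool :=
  let: (bx, ix, jx) := x in let: (by_, iy, jy) := y in
  [&& bx != by_, ix == iy & jy == ~~ jx].

Definition inner_adj n k (x y : dgp_vertex n) : bool :=
  let: (bx, ix, jx) := x in let: (by_, iy, jy) := y in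
  [&& bx, by_, jy == ~~ jx & shift_eq k ix iy || shift_eq k iy ix].

Definition dgp_adj n k (x y : dgp_vertex n) : bool :=
  [|| outer_adj x y, spoke_adj x y | inner_adj k x y].

Definition Aut_DGP n k : {set {perm dgp_vertex n}} :=
  [set f : {perm dgp_vertex n} |
     [forall x, forall y, dgp_adj k (f x) (f y) == dgp_adj k x y]].

Definition spokes n : {set {set dgp_vertex n}} :=
  [set [set x; y] | x in dgp_vertex n, y in dgp_vertex n & spoke_adj x y].

Definition B_DGP n k : {set {perm dgp_vertex n}} :=
  [set f in Aut_DGP n k | [set (fun x => f x) @: e | e : {set dgp_vertex n} in spokes n] == spokes n].

From mathcomp Require Import all_boot fingroup perm zify.

(* Count the closed walks of length 8 through a vertex of DGP(n,2).  As soon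
   as n > 16 no such walk can wrap around a rim, so the count is the one in
   the infinite cover, where it is computed: 561 at every u-vertex and 557 at
   every v-vertex.  Automorphisms preserve walk counts, hence fix the two
   classes of vertices, hence map spokes (the edges joining the two classes)
   to spokes. *)

Section Walks.
Context {T : finType} (e : rel T).

Fixpoint nwalks (L : nat) (x y : T) : nat :=
  if L is L'.+1 then \sum_(z | e x z) nwalks L' z y else (x == y : nat).

Lemma nwalks_perm (f : {perm T}) : {mono f : x y / e x y} ->
  forall L x y, nwalks L (f x) (f y) = nwalks L x y.
Proof.
move=> fe; elim=> [|L IHL] x y /=; first by rewrite (inj_eq perm_inj).
rewrite (reindex_inj (@perm_inj _ f)) /=.
by apply: eq_big => [z|z _]; rewrite ?fe ?IHL.
Qed.

End Walks.

Lemma imset_inj_subset_eq (T : finType) (g : T -> T) (A : {set T}) :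
  injective g -> g @: A \subset A -> g @: A = A.
Proof. by move=> ginj gA; apply/eqP; rewrite eqEcard gA (card_imset _ ginj) leqnn. Qed.

Section DGP2.
Variable m : nat.
Local Notation n := m.+1.
Local Notation V := (dgp_vertex n).
Hypothesis n_gt16 : 16 < n.

Definition shift (s : nat) (i : 'I_n) : 'I_n := inord ((i + s) %% n).

Lemma shiftE s i : shift s i = (i + s) %% n :> nat.
Proof. by rewrite inordK // ltn_pmod. Qed.

Lemma shift_eqE s (i i' : 'I_n) : shift_eq s i i' = (i' == shift s i).
Proof. by rewrite /shift_eq -val_eqE /= shiftE eq_sym. Qed.

(* Adding [s * (n - 1)] subtracts [s] modulo [n]. *)
Lemma shift_eq_backE s (i i' : 'I_n) : s < n ->
  shift_eq s i' i = (i' == shift (s * (n - 1)) i).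
Proof.
move=> s_lt_n; rewrite /shift_eq -val_eqE /= shiftE.
rewrite -{1}(modn_small (ltn_ord i)) -[X in _ = (X == _)](modn_small (ltn_ord i')).
rewrite -[RHS](eqn_modDr s) subn1 /= -addnA -mulnSr.
by rewrite [i + _]addnC modnMDl.
Qed.

Definition stride (b : bool) : nat := if b then 2 else 1.

Lemma stride_lt b : stride b < n.
Proof. by case: b; apply: leq_trans n_gt16. Qed.

Definition nbr_up (x : V) : V :=
  let: (b, i, j) := x in (b, shift (stride b) i, ~~ j).
Definition nbr_down (x : V) : V :=
  let: (b, i, j) := x in (b, shift (stride b * (n - 1)) i, ~~ j).
Definition nbr_spoke (x : V) : V :=
  let: (b, i, j) := x in (~~ b, i, ~~ j).

Lemma dgp_adj2E (x y : V) :
  dgp_adj 2 x y = [|| y == nbr_up x, y == nbr_down x | y == nbr_spoke x].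
Proof.
case: x => [[bx ix] jx]; case: y => [[by_ iy] jy].
rewrite /dgp_adj /outer_adj /spoke_adj /inner_adj /=.
have back1 := shift_eq_backE _ ix iy (stride_lt false).
have back2 := shift_eq_backE _ ix iy (stride_lt true).
case: bx; case: by_; rewrite /= ?back1 ?back2 ?shift_eqE ?xpair_eqE /= ?andbT ?andbF ?orbF //=.
- by case: (jy == ~~ jx); rewrite ?andbF ?andbT.
- by rewrite eq_sym andbC.
- by rewrite eq_sym andbC.
- by case: (jy == ~~ jx); rewrite ?andbF ?andbT.
Qed.

Lemma shift_up_neq_down b (i : 'I_n) :
  shift (stride b) i != shift (stride b * (n - 1)) i.
Proof.
rewrite -shift_eq_backE ?stride_lt // /shift_eq shiftE modnDml -addnA.
rewrite -{2}(modn_small (ltn_ord i)) -{2}[nat_of_ord i]addn0 eqn_modDl.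
have stride2_lt : stride b + stride b < n by case: b; apply: leq_trans n_gt16.
by rewrite modn_small //; case: b stride2_lt.
Qed.

Lemma uniq_nbrs x : uniq [:: nbr_up x; nbr_down x; nbr_spoke x].
Proof.
case: x => [[b i] j] /=; rewrite !inE !xpair_eqE /= !negb_or.
by rewrite eqxx (negbTE (shift_up_neq_down b i)); case: b.
Qed.

Lemma sum_dgp_adj2 (F : V -> nat) x :
  \sum_(z | dgp_adj 2 x z) F z = F (nbr_up x) + F (nbr_down x) + F (nbr_spoke x).
Proof.
rewrite (eq_bigl (mem [:: nbr_up x; nbr_down x; nbr_spoke x])); last first.
  by move=> z; rewrite dgp_adj2E !inE.
by rewrite -big_uniq ?uniq_nbrs // !big_cons big_nil /= addn0 addnA.
Qed.

(* A state (b, p, q, j) of the cover lies over the vertex (b, i + p - q, j)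
   for a fixed base index i; adding [q * (n - 1)] avoids truncated
   subtraction. *)
Definition cover := (bool * nat * nat * bool)%type.

Definition proj (i : 'I_n) (s : cover) : V :=
  let: (b, p, q, j) := s in (b, inord ((i + p + q * (n - 1)) %% n), j).

Definition cover_up (s : cover) : cover :=
  let: (b, p, q, j) := s in (b, p + stride b, q, ~~ j).
Definition cover_down (s : cover) : cover :=
  let: (b, p, q, j) := s in (b, p, q + stride b, ~~ j).
Definition cover_spoke (s : cover) : cover :=
  let: (b, p, q, j) := s in (~~ b, p, q, ~~ j).

Fixpoint cover_walks (L : nat) (s : cover) (P : pred cover) : nat :=
  if L is L'.+1 then
    cover_walks L' (cover_up s) P + cover_walks L' (cover_down s) P
      + cover_walks L' (cover_spoke s) P
  else P s.

Lemma nbr_up_proj i s : nbr_up (proj i s) = proj i (cover_up s).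
Proof.
case: s => [[[b p] q] j] /=; congr (_, _, _); apply: val_inj.
by rewrite /= shiftE !inordK ?ltn_pmod // modnDml -!addnA [q * _ + _]addnC.
Qed.

Lemma nbr_down_proj i s : nbr_down (proj i s) = proj i (cover_down s).
Proof.
case: s => [[[b p] q] j] /=; congr (_, _, _); apply: val_inj.
by rewrite /= shiftE !inordK ?ltn_pmod // modnDml mulnDl !addnA.
Qed.

Lemma nbr_spoke_proj i s : nbr_spoke (proj i s) = proj i (cover_spoke s).
Proof. by case: s => [[[b p] q] j]. Qed.

Lemma nwalks_proj L i s y :
  nwalks (dgp_adj 2) L (proj i s) y = cover_walks L s (fun t => proj i t == y).
Proof.
elim: L s => [|L IHL] s //=.
by rewrite sum_dgp_adj2 nbr_up_proj nbr_down_proj nbr_spoke_proj !IHL.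
Qed.

Definition cover_fwd (s : cover) : nat := let: (_, p, _, _) := s in p.
Definition cover_back (s : cover) : nat := let: (_, _, q, _) := s in q.

Lemma eq_cover_walks L s (P Q : pred cover) :
  (forall t, cover_fwd t <= cover_fwd s + 2 * L ->
             cover_back t <= cover_back s + 2 * L -> P t = Q t) ->
  cover_walks L s P = cover_walks L s Q.
Proof.
elim: L s => [|L IHL] [[[b p] q] j] PQ /=; first by rewrite PQ ?muln0 ?addn0.
have stride_le2 : stride b <= 2 by case: (b).
by rewrite !IHL // => t /= fwd_t back_t; apply: PQ; rewrite /= mulnS; lia.
Qed.

Definition over_base (b j : bool) (s : cover) : bool :=
  let: (b', p, q, j') := s in [&& b' == b, p == q & j' == j].

(* With [p, q <= 16 < n], the displacement [p - q] vanishes modulo [n] only if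
   it vanishes. *)
Lemma proj_eq_base (i : 'I_n) b j s : cover_fwd s <= 16 -> cover_back s <= 16 ->
  (proj i s == (b, i, j)) = over_base b j s.
Proof.
case: s => [[[b' p] q] j'] /= p_le q_le.
rewrite !xpair_eqE -val_eqE /= inordK ?ltn_pmod // -andbA.
congr (_ && (_ && _)).
rewrite -{2}(modn_small (ltn_ord i)) -(eqn_modDr q) -[i + p + _ + q]addnA.
rewrite -mulnSr subn1 /= [i + p + _]addnC modnMDl eqn_modDl.
by rewrite !modn_small //; apply: leq_ltn_trans n_gt16; lia.
Qed.

Definition is_inner (x : V) : bool := let: (b, _, _) := x in b.

Lemma closed_nwalks8 (x : V) :
  nwalks (dgp_adj 2) 8 x x = if is_inner x then 557 else 561.
Proof.
case: x => [[b i] j].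
have base : (b, i, j) = proj i (b, 0, 0, j).
  by congr (_, _, _); apply: val_inj; rewrite /= inordK !addn0 ?modn_small ?ltn_pmod.
rewrite {1}base nwalks_proj (@eq_cover_walks _ _ _ (over_base b j)); last first.
  by move=> t fwd_t back_t; rewrite proj_eq_base.
by case: b {base}; case: j; vm_compute.
Qed.

Lemma aut_dgp_mono (f : {perm V}) : f \in Aut_DGP n 2 ->
  {mono f : x y / dgp_adj 2 x y}.
Proof. by rewrite inE => /forallP fA x y; apply/eqP; move/forallP: (fA x). Qed.

Lemma aut_is_inner (f : {perm V}) x : f \in Aut_DGP n 2 -> is_inner (f x) = is_inner x.
Proof.
move=> /aut_dgp_mono/nwalks_perm/(_ 8 x x).
by rewrite !closed_nwalks8; case: (is_inner x); case: (is_inner (f x)).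
Qed.

Lemma spoke_adjE (x y : V) :
  spoke_adj x y = dgp_adj 2 x y && (is_inner x != is_inner y).
Proof.
case: x => [[bx ix] jx]; case: y => [[by_ iy] jy].
rewrite /dgp_adj /outer_adj /spoke_adj /inner_adj /=.
case: bx; case: by_; rewrite /= ?andbF ?andbT ?orbF //=.
all: by case: (_ == _); rewrite /= ?andbF ?andbT.
Qed.

Lemma aut_spokes (f : {perm V}) : f \in Aut_DGP n 2 ->
  [set (fun x => f x) @: e | e : {set V} in spokes n] = spokes n.
Proof.
move=> fA; apply: imset_inj_subset_eq; first by apply: imset_inj; apply: perm_inj.
apply/subsetP => _ /imsetP [_ /imset2P [x y _ + ->] ->].
rewrite inE => sxy; apply/imset2P; exists (f x) (f y).
- by [].
- by rewrite inE spoke_adjE aut_dgp_mono // !aut_is_inner // -spoke_adjE.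
- by rewrite imsetU1 imset_set1.
Qed.

End DGP2.

Theorem lemma5p9 (n : nat) : 20 < n -> Aut_DGP n 2 = B_DGP n 2.
Proof.
case: n => // m n_gt20; apply/setP => f; rewrite /B_DGP inE.
case fA: (f \in Aut_DGP m.+1 2) => //=.
by rewrite aut_spokes ?eqxx //; apply: leq_trans n_gt20.
Qed.
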